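(* Let $D$ be a square-free integer, let $\mathbb{Z}[\sqrt{D}]$ denote the ring of integers of $\mathbb{Q}(\sqrt{D})$, and let $p$ be a prime integer which is irreducible but not prime in $\mathbb{Z}[\sqrt{D}]$. Let $z\in I_p(D)$. Then (1) $p$ divides $\lVert z\rVert$ in $\mathbb{Z}$, and (2) $\bar{z}\in I_p(D)$. Moreover, for any integer $t\in\mathbb{Z}$, $(\mathbb{Z}\cup R^*\cup tR^* )\cap I_p(D)=\emptyset$, where $R^*=\mathbb{Z}[\sqrt{D}]^{\times}$ is the unit group and $tR^*=\{tu: u\in R^*\}$.
   Context: Here $\mathbb{Z}[\sqrt{D}]=\{a+b\sqrt{D}:a,b\in\mathbb{Z}\}$ if $D\equiv 2,3 \pmod 4$ and $\mathbb{Z}[\sqrt{D}]=\{\frac{a+b\sqrt{D}}{2}:a,b\in\mathbb{Z},\ a\equiv b \pmod 2\}$ if $D\equiv 1\pmod 4$. For $z=x+y\sqrt{D}$ (with $x,y\in\mathbb{Q}$), $\bar z=x-y\sqrt{D}$ is its conjugate and $\lVert z\rVert=z\bar z$ its norm. $\langle a_1,\dots,a_k\rangle$ denotes the ideal generated by $a_1,\dots,a_k$. $I_p(D)$ is the set of all non-unit $z\in\mathbb{Z}[\sqrt{D}]$ such that $z\notin\langle p\rangle$ but there exists $m\in\mathbb{Z}[\sqrt{D}]$ with $m\notin\langle p\rangle$ and $zm\in\langle p\rangle$. *)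

From HB Require Import structures.
From mathcomp Require Import all_boot all_order all_algebra.
Set Implicit Arguments. Unset Strict Implicit. Unset Printing Implicit Defensive.
Import Order.TTheory GRing.Theory Num.Theory.
Local Open Scope ring_scope.

(* Elements of Q(sqrt D) are represented as pairs (x, y) of rationals,
   standing for x + y sqrt D. *)
Definition qd := (rat * rat)%type.

Definition squarefree (D : int) : Prop :=
  D != 0 /\ forall n : int, (n * n %| D)%Z -> `|n| = 1.

Definition is_int (x : rat) : Prop := exists a : int, x = a%:~R.

Definition inR (D : int) (z : qd) : Prop :=
  if (D %% 4)%Z == 1 then
    exists a b : int, (a %% 2)%Z = (b %% 2)%Z /\ z = (a%:~R / 2, b%:~R / 2)
  else is_int z.1 /\ is_int z.2.

Definition qmul (D : int) (z w : qd) : qd :=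
  (z.1 * w.1 + D%:~R * z.2 * w.2, z.1 * w.2 + z.2 * w.1).

Definition qconj (z : qd) : qd := (z.1, - z.2).

Definition qnorm (D : int) (z : qd) : rat := z.1 ^+ 2 - D%:~R * z.2 ^+ 2.

Definition qone : qd := (1, 0).
Definition qzero : qd := (0, 0).
Definition ofint (t : int) : qd := (t%:~R, 0).

Definition isunit (D : int) (z : qd) : Prop :=
  inR D z /\ exists w, inR D w /\ qmul D z w = qone.

Definition in_ideal (D : int) (a z : qd) : Prop :=
  exists m, inR D m /\ z = qmul D a m.

Definition irreducibleR (D : int) (a : qd) : Prop :=
  inR D a /\ a <> qzero /\ ~ isunit D a /\
  forall b c, inR D b -> inR D c -> a = qmul D b c -> isunit D b \/ isunit D c.

Definition primeR (D : int) (a : qd) : Prop :=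
  inR D a /\ a <> qzero /\ ~ isunit D a /\
  forall b c, inR D b -> inR D c -> in_ideal D a (qmul D b c) ->
    in_ideal D a b \/ in_ideal D a c.

Definition Ip (D : int) (p : nat) (z : qd) : Prop :=
  inR D z /\ ~ isunit D z /\ ~ in_ideal D (ofint p%:Z) z /\
  exists m, inR D m /\ ~ in_ideal D (ofint p%:Z) m /\
            in_ideal D (ofint p%:Z) (qmul D z m).

(** The norm [N z = z * conj z] is an integer for [z] in Z[sqrt D]. If [z m] lies in
    [<p>] but [m] does not, then [p] must divide [N z]: otherwise a Bezout relation
    [u p + v N z = 1] gives [m = u p m + v conj(z) (z m)], which lies in [<p>].
    Conjugation is a ring automorphism fixing [p], so it preserves [I_p(D)].
    Finally [N (t u) = t^2 N u] with [N u] a unit of Z, so [p | N (t u)] forces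
    [p | t] and hence [t u] lies in [<p>]; integers are the case [u = 1]. *)
From HB Require Import structures.
From mathcomp Require Import all_boot all_order all_algebra ring.
Import Order.TTheory GRing.Theory Num.Theory.
Local Open Scope ring_scope.

Lemma is_intP (x : rat) : is_int x <-> x \is a Num.int.
Proof. by split => [[a ->]|/intrP]. Qed.

Lemma modz2_eq_split (a b : int) :
  (a %% 2)%Z = (b %% 2)%Z -> a = b + (divz a 2 - divz b 2) * 2.
Proof. by move=> ab; rewrite {1}(intdiv.divz_eq a 2) {1}(intdiv.divz_eq b 2) ab; ring. Qed.

Lemma prime_dvdz_sqr (p : nat) (n : int) : prime p -> (p %| n * n)%Z -> (p %| n)%Z.
Proof. by move=> p_pr; rewrite !dvdzE abszM Euclid_dvdM // orbb. Qed.

Section QuadraticIntegers.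

Set Implicit Arguments.
Unset Strict Implicit.

Variable D : int.

Definition qadd (z w : qd) : qd := (z.1 + w.1, z.2 + w.2).

Lemma inR_halfP {z} : (D %% 4)%Z = 1 ->
  inR D z <-> exists b e : int, z = ((b + e * 2)%:~R / 2, b%:~R / 2).
Proof.
move=> D1; rewrite /inR D1 eqxx; split.
  by move=> [a [b [ab ->]]]; exists b, (divz a 2 - divz b 2); rewrite -modz2_eq_split.
by move=> [b [e ->]]; exists (b + e * 2), b; rewrite addrC modzMDl.
Qed.

Lemma inR_intP {z} : (D %% 4)%Z != 1 ->
  inR D z <-> z.1 \is a Num.int /\ z.2 \is a Num.int.
Proof. by move=> D1; rewrite /inR (negbTE D1) !is_intP. Qed.

Lemma modz4_1_split : (D %% 4)%Z = 1 -> D = divz D 4 * 4 + 1.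
Proof. by move=> D1; rewrite {1}(intdiv.divz_eq D 4) D1. Qed.

Lemma inR_ofint t : inR D (ofint t).
Proof.
have [D1|D1] := eqVneq (D %% 4)%Z 1.
  by apply/(inR_halfP D1); exists 0, t; rewrite /ofint add0r intrM; congr (_, _); field.
by apply/(inR_intP D1); rewrite /= rpred_int rpred0.
Qed.

Lemma inR_add z w : inR D z -> inR D w -> inR D (qadd z w).
Proof.
have [D1|D1] := eqVneq (D %% 4)%Z 1.
  rewrite !(inR_halfP D1) => -[b [e ->]] [c [f ->]].
  by exists (b + c), (e + f); rewrite /qadd /= !intrD; congr (_, _); ring.
rewrite !(inR_intP D1) => -[? ?] [? ?]; split; exact: rpredD.
Qed.

Lemma inR_mul z w : inR D z -> inR D w -> inR D (qmul D z w).
Proof.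
have [D1|D1] := eqVneq (D %% 4)%Z 1.
  rewrite !(inR_halfP D1) (modz4_1_split D1) => -[b [e ->]] [c [f ->]].
  exists (b * c + e * c + b * f), (e * f + divz D 4 * b * c).
  by rewrite /qmul /= !(intrD, intrM); congr (_, _); field.
rewrite !(inR_intP D1) /qmul /= => -[? ?] [? ?].
by split; rewrite ?rpredD ?rpredM ?rpred_int.
Qed.

Lemma inR_conj z : inR D z -> inR D (qconj z).
Proof.
have [D1|D1] := eqVneq (D %% 4)%Z 1.
  rewrite !(inR_halfP D1) => -[b [e ->]].
  by exists (- b), (e + b); rewrite /qconj /= !(intrD, mulrNz); congr (_, _); ring.
by rewrite !(inR_intP D1) /= => -[? ?]; rewrite rpredN.
Qed.

Lemma qnorm_int z : inR D z -> qnorm D z \is a Num.int.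
Proof.
have [D1|D1] := eqVneq (D %% 4)%Z 1.
  rewrite (inR_halfP D1) (modz4_1_split D1) => -[b [e ->]].
  apply/intrP; exists (b * e + e * e - divz D 4 * b * b).
  by rewrite /qnorm /= !(intrD, intrB, intrM); field.
by rewrite (inR_intP D1) /qnorm => -[? ?]; rewrite rpredB ?rpredM ?rpredX ?rpred_int.
Qed.

Lemma qconjK z : qconj (qconj z) = z.
Proof. by case: z => a b; rewrite /qconj opprK. Qed.

Lemma qconj_mul z w : qconj (qmul D z w) = qmul D (qconj z) (qconj w).
Proof. by case: z w => a b [c d]; rewrite /qconj /qmul /=; congr (_, _); ring. Qed.

Lemma qconj_ofint t : qconj (ofint t) = ofint t.
Proof. by rewrite /qconj oppr0. Qed.

Lemma qnorm_mul z w : qnorm D (qmul D z w) = qnorm D z * qnorm D w.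
Proof. by case: z w => a b [c d]; rewrite /qnorm /qmul /=; ring. Qed.

Lemma qnorm_ofint t : qnorm D (ofint t) = t%:~R ^+ 2.
Proof. by rewrite /qnorm /= expr0n mulr0 subr0. Qed.

Lemma qmul_qone z : qmul D z qone = z.
Proof. by case: z => a b; rewrite /qmul /=; congr (_, _); ring. Qed.

Lemma isunit_qone : isunit D qone.
Proof.
split; first exact: (inR_ofint 1).
by exists qone; split; [exact: (inR_ofint 1) | exact: qmul_qone].
Qed.

Lemma isunit_conj z : isunit D z -> isunit D (qconj z).
Proof.
move=> [zR [w [wR zw]]]; split; first exact: inR_conj.
exists (qconj w); split; first exact: inR_conj.
by rewrite -qconj_mul zw /qconj oppr0.
Qed.

Lemma isunit_qnorm u : isunit D u -> exists j : int, qnorm D u * j%:~R = 1.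
Proof.
move=> [_ [w [wR uw]]]; have /intrP[j Nw] := qnorm_int wR.
by exists j; rewrite -Nw -qnorm_mul uw /qnorm /=; ring.
Qed.

Lemma in_ideal_add a x y :
  in_ideal D a x -> in_ideal D a y -> in_ideal D a (qadd x y).
Proof.
move=> [m [mR ->]] [n [nR ->]]; exists (qadd m n); split; first exact: inR_add.
by rewrite /qadd /qmul /=; congr (_, _); ring.
Qed.

Lemma in_ideal_mull a w x :
  inR D w -> in_ideal D a x -> in_ideal D a (qmul D w x).
Proof.
move=> wR [m [mR ->]]; exists (qmul D w m); split; first exact: inR_mul.
by rewrite /qmul /=; congr (_, _); ring.
Qed.

Lemma in_ideal_ofint_conj t x :
  in_ideal D (ofint t) x -> in_ideal D (ofint t) (qconj x).
Proof.
move=> [m [mR ->]]; exists (qconj m); split; first exact: inR_conj.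
by rewrite qconj_mul qconj_ofint.
Qed.

Lemma in_ideal_ofint_dvd (p t : int) u :
  (p %| t)%Z -> inR D u -> in_ideal D (ofint p) (qmul D (ofint t) u).
Proof.
move=> /dvdzP[s ->] uR; exists (qmul D (ofint s) u); split.
  by apply: inR_mul => //; exact: inR_ofint.
by rewrite /qmul /= intrM; congr (_, _); ring.
Qed.

Lemma bezout_norm_split (u v p : int) z (m : qd) :
  u%:~R * p%:~R + v%:~R * qnorm D z = 1 :> rat ->
  m = qadd (qmul D (ofint u) (qmul D (ofint p) m))
           (qmul D (ofint v) (qmul D (qconj z) (qmul D z m))).
Proof.
case: z m => a b [c d]; rewrite /qnorm /qadd /qmul /= => uv.
congr (_, _); [rewrite -[c in LHS]mul1r | rewrite -[d in LHS]mul1r].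
  all: by rewrite -[1 in LHS]uv; ring.
Qed.

Lemma in_ideal_coprime_qnorm (p k : int) z m :
  inR D z -> inR D m -> qnorm D z = k%:~R -> coprimez p k ->
  in_ideal D (ofint p) (qmul D z m) -> in_ideal D (ofint p) m.
Proof.
move=> zR mR Nz /coprimezP[[u v] /= uv] zm.
have uv' : u%:~R * p%:~R + v%:~R * qnorm D z = 1 :> rat.
  by rewrite Nz -!intrM -intrD uv.
rewrite (bezout_norm_split m uv'); apply: in_ideal_add.
  apply: in_ideal_mull; first exact: inR_ofint.
  by exists m.
by apply: in_ideal_mull; [exact: inR_ofint | apply: in_ideal_mull; first exact: inR_conj].
Qed.

Lemma Ip_qnorm_dvd p z : prime p -> Ip D p z ->
  exists k : int, qnorm D z = (k * p%:Z)%:~R.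
Proof.
move=> p_pr [zR [_ [_ [m [mR [mNp zm]]]]]].
have /intrP[k Nz] := qnorm_int zR.
have [/dvdzP[l kE]|pNk] := boolP (p%:Z %| k)%Z; first by exists l; rewrite Nz kE.
have p_k : coprimez p k.
  by rewrite /coprimez /gcdz /=; change (coprime p `|k|); rewrite prime_coprime.
by case: mNp; exact: in_ideal_coprime_qnorm Nz p_k zm.
Qed.

Lemma Ip_conj p z : Ip D p z -> Ip D p (qconj z).
Proof.
move=> [zR [zU [zNp [m [mR [mNp zm]]]]]].
split; first exact: inR_conj.
split; first by move/isunit_conj; rewrite qconjK.
split; first by move/in_ideal_ofint_conj; rewrite qconjK.
exists (qconj m); split; first exact: inR_conj.
split; first by move/in_ideal_ofint_conj; rewrite qconjK.
by rewrite -qconj_mul; exact: in_ideal_ofint_conj.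
Qed.

Lemma Ip_ofint_mul_unit p t u : prime p -> isunit D u -> ~ Ip D p (qmul D (ofint t) u).
Proof.
move=> p_pr uU Ip_tu; have [k Ntu] := Ip_qnorm_dvd p_pr Ip_tu.
have [j Nu] := isunit_qnorm uU.
rewrite qnorm_mul qnorm_ofint in Ntu.
have tt : t * t = k * j * p%:Z.
  have /= t2 := congr1 ( *%R^~ j%:~R) Ntu; rewrite -mulrA Nu mulr1 in t2.
  by apply: (@intr_inj rat); rewrite !intrM -expr2 t2 intrM; ring.
have p_t : (p%:Z %| t)%Z.
  by apply: (prime_dvdz_sqr _ _ p_pr); rewrite tt; exact: dvdz_mull.
by case: Ip_tu => _ [_ [[]]]; apply: in_ideal_ofint_dvd p_t _; case: uU.
Qed.

End QuadraticIntegers.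

Theorem proposition2p2 (D : int) (p : nat) :
  squarefree D -> D != 1 -> prime p ->
  irreducibleR D (ofint p%:Z) -> ~ primeR D (ofint p%:Z) ->
  (forall z, Ip D p z ->
     (exists k : int, qnorm D z = (k * p%:Z)%:~R) /\ Ip D p (qconj z)) /\
  (forall (t : int) (w : qd),
     ((exists n : int, w = ofint n) \/ isunit D w \/
      (exists u, isunit D u /\ w = qmul D (ofint t) u)) ->
     ~ Ip D p w).
Proof.
move=> _ _ p_pr _ _; split=> [z Ip_z|t w].
  by split; [exact: Ip_qnorm_dvd | exact: Ip_conj].
move=> [[n ->]|[wU|[u [uU ->]]]].
- by rewrite -(qmul_qone D (ofint n)); exact: Ip_ofint_mul_unit (isunit_qone D).
- by move=> [_ []].
- exact: Ip_ofint_mul_unit.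
Qed.
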